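(* For every graph $G$ and every $k\in\mathbb{N}$: if $\delta^{\infty}_{\rm e}(G)\leq k$, then $G\in\mathcal{A}_k^{(\leq k)}$. Conversely, for every $k\in\mathbb{N}_{\geq1}$, every graph $G\in\mathcal{A}_k^{(\leq k)}$ satisfies $\delta^{\infty}_{\rm e}(G)\leq 2k-1$.
   Context: All graphs are finite, undirected, loopless, and may have parallel edges; $\deg_G(v)$ is the number of edges incident to $v$ (counted with multiplicity), $E_G(v)$ the multiset of these edges. $\delta^{\infty}_{\rm e}(G)$ (edge-admissibility) is the minimum, over all linear orderings $\langle v_1,\dots,v_n\rangle$ of $V(G)$, of $\max_i \lambda_i$, where $\lambda_i$ is the minimum number of edges whose removal destroys all paths from $v_i$ to $\{v_1,\dots,v_{i-1}\}$ ($\lambda_1=0$); equivalently the maximum number of pairwise edge-disjoint paths from $v_i$ to $\{v_1,\dots,v_{i-1}\}$. Edge sums: let $G_1,G_2$ be disjoint graphs, $v_1\in V(G_1)$, $v_2\in V(G_2)$ with $\deg_{G_1}(v_1)=\deg_{G_2}(v_2)=k'$, and $\sigma:E_{G_1}(v_1)\to E_{G_2}(v_2)$ a bijection. The $k'$-edge sum of $G_1$ and $G_2$ on $v_1,v_2$ w.r.t. $\sigma$ is obtained from the disjoint union by deleting $v_1$ and $v_2$ and, for each edge $e=v_1x\in E_{G_1}(v_1)$ with $\sigma(e)=v_2y$, adding a new edge $xy$. A graph is a $(\leq k)$-edge sum of $G_1$ and $G_2$ if it is their disjoint union or a $k'$-edge sum of them for some $k'\in\{1,\dots,k\}$ and some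 choice of $v_1,v_2,\sigma$. $\mathcal{A}_k$ is the class of graphs in which all vertices except possibly one have degree at most $k$. $\mathcal{A}_k^{(\leq k)}$ is the smallest class of graphs containing $\mathcal{A}_k$ and containing every $(\leq k)$-edge sum of any two of its members. *)

From mathcomp Require Import all_boot.
Set Implicit Arguments. Unset Strict Implicit. Unset Printing Implicit Defensive.

(* A finite, undirected, loopless multigraph: every edge e has two distinct
   endpoints src e, tgt e (the orientation is irrelevant everywhere below);
   parallel edges are distinct elements of [edge]. *)
Record mgraph := MGraph {
  vert : finType;
  edge : finType;
  src : edge -> vert;
  tgt : edge -> vert;
  loopless : forall e, src e != tgt e }.

Arguments src {m} e.
Arguments tgt {m} e.

Section Basic.
Variable G : mgraph.

Definition incident (v : vert G) (e : edge G) : bool := (src e == v) || (tgt e == v).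

Definition deg (v : vert G) : nat := #|[set e | incident v e]|.

Definition other (v : vert G) (e : edge G) : vert G := if src e == v then tgt e else src e.

Lemma other_neq v e : incident v e -> other v e != v.
Proof.
rewrite /incident /other; case: eqP => [<- _|_ /= /eqP <-].
  by rewrite eq_sym loopless.
exact: loopless.
Qed.

Lemma src_nincident v e : ~~ incident v e -> src e != v.
Proof. by rewrite /incident negb_or => /andP[]. Qed.

Lemma tgt_nincident v e : ~~ incident v e -> tgt e != v.
Proof. by rewrite /incident negb_or => /andP[]. Qed.

Definition adj_minus (F : {set edge G}) : rel (vert G) :=
  [rel x y | [exists e, (e \notin F) &&
      (((src e == x) && (tgt e == y)) || ((src e == y) && (tgt e == x)))]].

Definition separates (F : {set edge G}) (v : vert G) (S : {set vert G}) : bool :=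
  [forall s in S, ~~ connect (adj_minus F) v s].

(* lambda(v, S): minimum number of edges whose removal destroys all paths
   from v to S (the edge set of G always works when v \notin S, so the
   default #|edge G| of the min is harmless). *)
Definition lambda (S : {set vert G}) (v : vert G) : nat :=
  \big[minn/#|edge G|]_(F : {set edge G} | separates F v S) #|F|.

(* edge-admissibility: min over linear orderings <v_0,...,v_{n-1}> of V(G)
   (bijections 'I_n -> V(G)) of max_i lambda(v_i, {v_j | j < i}). *)
Definition edge_adm : nat :=
  \big[minn/#|edge G|]_(f : {ffun 'I_#|vert G| -> vert G} | injectiveb f)
     \max_(i < #|vert G|) lambda [set f j | j : 'I_#|vert G| & (j < i)%N] (f i).

End Basic.

Definition iso (G H : mgraph) : Prop :=
  exists (fV : vert G -> vert H) (fE : edge G -> edge H),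
    [/\ bijective fV, bijective fE &
      forall e, ((src (fE e) == fV (src e)) && (tgt (fE e) == fV (tgt e)))
             || ((src (fE e) == fV (tgt e)) && (tgt (fE e) == fV (src e)))].

Definition inA (k : nat) (G : mgraph) : bool :=
  #|[set v : vert G | k < deg v]| <= 1.

Section DUnion.
Variables G1 G2 : mgraph.
Definition du_src (e : edge G1 + edge G2) : vert G1 + vert G2 :=
  match e with inl e1 => inl (src e1) | inr e2 => inr (src e2) end.
Definition du_tgt (e : edge G1 + edge G2) : vert G1 + vert G2 :=
  match e with inl e1 => inl (tgt e1) | inr e2 => inr (tgt e2) end.
Lemma du_loopless e : du_src e != du_tgt e.
Proof. by case: e => e /=; rewrite inj_eq ?loopless //; [exact: inl_inj | exact: inr_inj]. Qed.
Definition dunion : mgraph := MGraph du_loopless.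
End DUnion.

(* Edges: the edges of G1 not at v1, the edges of
   G2 not at v2, and, for each edge e of G1 at v1, a new edge joining the
   other endpoint of e to the other endpoint of sigma(e) (in G2). *)
Section ESum.
Variables (G1 G2 : mgraph) (v1 : vert G1) (v2 : vert G2) (sigma : edge G1 -> edge G2).
Hypothesis hsigma : forall e, incident v1 e -> incident v2 (sigma e).

Definition es_vert : finType := ({x : vert G1 | x != v1} + {y : vert G2 | y != v2})%type.
Definition es_edge : finType :=
  (({e : edge G1 | ~~ incident v1 e} + {e : edge G2 | ~~ incident v2 e})
     + {e : edge G1 | incident v1 e})%type.

Definition es_src (e : es_edge) : es_vert :=
  match e with
  | inl (inl (exist e1 h)) => inl (exist _ (src e1) (src_nincident h))
  | inl (inr (exist e2 h)) => inr (exist _ (src e2) (src_nincident h))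
  | inr (exist e1 h) => inl (exist _ (other v1 e1) (other_neq h))
  end.
Definition es_tgt (e : es_edge) : es_vert :=
  match e with
  | inl (inl (exist e1 h)) => inl (exist _ (tgt e1) (tgt_nincident h))
  | inl (inr (exist e2 h)) => inr (exist _ (tgt e2) (tgt_nincident h))
  | inr (exist e1 h) => inr (exist _ (other v2 (sigma e1)) (other_neq (hsigma h)))
  end.
Lemma es_loopless e : es_src e != es_tgt e.
Proof.
case: e => [[[e h]|[e h]]|[e h]] //=.
- apply/negP => /eqP [] /eqP; exact/negP/loopless.
- apply/negP => /eqP [] /eqP; exact/negP/loopless.
Qed.
Definition edge_sum : mgraph := MGraph es_loopless.
End ESum.

(* The class A_k^{(<= k)}: smallest class containing A_k and closed under
   (<= k)-edge sums (disjoint union, or k'-edge sums with 1 <= k' <= k),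
   graphs being taken up to isomorphism. *)
Inductive inAsum (k : nat) : mgraph -> Prop :=
  | inAsum_base G : inA k G -> inAsum k G
  | inAsum_union G1 G2 G :
      inAsum k G1 -> inAsum k G2 -> iso G (dunion G1 G2) -> inAsum k G
  | inAsum_sum G1 G2 G (v1 : vert G1) (v2 : vert G2) (sigma : edge G1 -> edge G2)
      (hsigma : forall e, incident v1 e -> incident v2 (sigma e)) :
      inAsum k G1 -> inAsum k G2 ->
      deg v1 = deg v2 ->
      0 < deg v1 <= k ->
      {in [pred e | incident v1 e] &, injective sigma} ->
      (forall f, incident v2 f -> exists2 e, incident v1 e & sigma e = f) ->
      iso G (edge_sum hsigma) -> inAsum k G.

From mathcomp Require Import all_boot zify.
Set Implicit Arguments. Unset Strict Implicit. Unset Printing Implicit Defensive.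

(* Everything is phrased with edge cuts: dcut Y counts the edges with exactly
   one end in Y, and lambda S u is the least dcut Y over the sets Y that
   contain u and avoid S.  An ordering s of V(G) witnesses edge_adm G <= k
   exactly when it is k-admissible, i.e. lambda (before s u) u <= k for all u.

   Second direction (in fact edge_adm G <= k <= 2k - 1).  lambda does not
   increase along contractions (merging vertices, deleting the edges inside
   merged classes).  A disjoint union and an edge sum contract onto each of
   their summands, so k-admissible orderings of the summands starting at a
   prescribed vertex glue into such an ordering of the whole graph; by
   induction on A_k^(<=k) every member has one, from any root.

   First direction, by induction on |V(G)|.  If at most one vertex has degree
   > k, G is in A_k.  Otherwise let h be the last vertex of degree > k in a
   k-admissible ordering, and C a minimum cut around h avoiding its
   predecessors.  If dcut C = 0, G is the disjoint union of G[C] and G[V-C].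
   Otherwise G is the dcut C-edge sum of G/(V-C), which is in A_k, and of G/C,
   which has fewer vertices and is still k-admissible by uncrossing cuts with
   the minimum cut C. *)

Lemma bigmin_leq (I : finType) (P : pred I) (F : I -> nat) d j :
  P j -> \big[minn/d]_(i | P i) F i <= F j.
Proof.
move=> Pj; rewrite -big_filter.
have : j \in [seq i <- index_enum I | P i] by rewrite mem_filter Pj mem_index_enum.
elim: [seq i <- index_enum I | P i] => //= a l IH; rewrite inE big_cons.
by case/orP => [/eqP ->|/IH h]; rewrite geq_min ?leqnn ?h ?orbT.
Qed.

Lemma bigmin_arg (I : finType) (P : pred I) (F : I -> nat) d j :
  P j -> F j <= d -> exists2 i, P i & F i <= \big[minn/d]_(i | P i) F i.
Proof.
move=> Pj Fj; elim/big_ind: _ => [|x y [i Pi hi] [i' Pi' hi']|i Pi].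
- by exists j.
- by case: (leqP x y) => hxy; [exists i | exists i']; rewrite // geq_min ?hi ?hi' ?orbT.
- by exists i.
Qed.

Lemma index_pmap_insub (T : eqType) (P : pred T) (s : seq T) (x y : {x : T | P x}) :
  index x (pmap insub s) < index y (pmap insub s) -> index (val x) s < index (val y) s.
Proof.
elim: s => //= a s IH; case: insubP => [u Pa <-|nPa] /=.
  by rewrite !(inj_eq val_inj); case: (u == x) => //; case: (u == y).
have neq (z : {x : T | P x}) : (a == val z) = false.
  by apply/negbTE; apply: contra nPa => /eqP ->; exact: valP.
by rewrite !neq.
Qed.

Lemma index_map_in (T1 T2 : eqType) (f : T1 -> T2) (l : seq T1) x :
  {in l &, injective f} -> x \in l -> index (f x) (map f l) = index x l.
Proof.
elim: l => //= a l IH hinj hx'; have hx := hx'; rewrite inE in hx.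
case: (a =P x) => [->|ax]; first by rewrite eqxx.
have -> : (f a == f x) = false.
  by apply/negbTE/negP => /eqP E; apply: ax; apply: hinj; rewrite ?mem_head.
congr _.+1; apply: IH.
  by move=> y z hy hz; apply: hinj; rewrite inE ?hy ?hz orbT.
by case/orP: hx => // /eqP E; case: ax.
Qed.

Lemma index_filter_lt (T : eqType) (p : pred T) (s : seq T) x y : p x -> p y ->
  index x (filter p s) < index y (filter p s) -> index x s < index y s.
Proof.
move=> px py; elim: s => //= a s IH; case: ifP => pa /=.
  by case: (a == x) => //; case: (a == y).
have -> : (a == x) = false by apply/negbTE; apply: contraFN pa => /eqP ->.
by have -> : (a == y) = false by apply/negbTE; apply: contraFN pa => /eqP ->.
Qed.

Lemma odflt_insub (T : eqType) (P : pred T) (x0 x : T) :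
  P x -> odflt x0 (omap val (insub x : option {x | P x})) = x.
Proof. by case: insubP => [u _ <-|/negP]. Qed.

Lemma uniq_sum_cat (A B : eqType) (l1 : seq A) (l2 : seq B) :
  uniq l1 -> uniq l2 -> uniq (map inl l1 ++ map inr l2).
Proof.
move=> u1 u2; rewrite cat_uniq (map_inj_uniq inl_inj) (map_inj_uniq inr_inj) u1 u2.
by rewrite /= andbT; apply/hasPn => z /mapP [y _ ->]; apply/mapP => -[].
Qed.

Lemma mem_sum_cat (A B : eqType) (l1 : seq A) (l2 : seq B) :
  (forall x, x \in l1) -> (forall y, y \in l2) ->
  forall z : A + B, z \in map inl l1 ++ map inr l2.
Proof.
move=> h1 h2 z; rewrite mem_cat.
by case: z => [x|y]; rewrite ?(mem_map inl_inj) ?(mem_map inr_inj) ?h1 ?h2 ?orbT.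
Qed.

Section Cuts.
Variable G : mgraph.
Implicit Types (S C X Y : {set vert G}) (h u v : vert G).

Definition crosses Y (e : edge G) : bool := (src e \in Y) != (tgt e \in Y).
Definition dcut Y : nat := #|[set e | crosses Y e]|.

(* dcut as a sum of indicators, to compare cuts edge by edge. *)
Lemma dcut_sum Y : dcut Y = \sum_e (crosses Y e : nat).
Proof.
rewrite /dcut -sum1_card big_mkcond /=; apply: eq_bigr => e _; rewrite inE.
by case: (crosses Y e).
Qed.

Lemma dcut_set1 v : dcut [set v] = deg v.
Proof.
rewrite /dcut /deg; apply: eq_card => e; rewrite !inE /crosses /incident !inE.
have := loopless e.
by case: (src e =P v) => [->|_]; case: (tgt e =P v) => [->|_] //=; rewrite eqxx.
Qed.

Lemma dcutC Y : dcut (~: Y) = dcut Y.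
Proof.
apply: eq_card => e; rewrite !inE /crosses !inE.
by case: (src e \in Y); case: (tgt e \in Y).
Qed.

Lemma dcut_eq0 Y : dcut Y = 0 -> forall e, ~~ crosses Y e.
Proof. by move/eqP; rewrite cards_eq0 => /eqP hY e; rewrite -[crosses _ _]in_set hY inE. Qed.

Lemma dcut_submod X Y : dcut (X :|: Y) + dcut (X :&: Y) <= dcut X + dcut Y.
Proof.
rewrite !dcut_sum -!big_split /=; apply: leq_sum => e _; rewrite /crosses !inE.
by case: (src e \in X); case: (tgt e \in X); case: (src e \in Y); case: (tgt e \in Y).
Qed.

Lemma dcut_posimod X Y : dcut (X :\: Y) + dcut (Y :\: X) <= dcut X + dcut Y.
Proof.
rewrite !dcut_sum -!big_split /=; apply: leq_sum => e _; rewrite /crosses !inE.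
by case: (src e \in X); case: (tgt e \in X); case: (src e \in Y); case: (tgt e \in Y).
Qed.

Lemma adj_cut Y x y : adj_minus [set e | crosses Y e] x y -> (x \in Y) = (y \in Y).
Proof.
move=> /existsP [e /andP[]]; rewrite inE negbK /crosses => /eqP heq.
by case/orP=> /andP[/eqP <- /eqP <-].
Qed.

Lemma separates_cut Y S u :
  u \in Y -> [disjoint Y & S] -> separates [set e | crosses Y e] u S.
Proof.
move=> uY dis; apply/forall_inP => s sS; apply/negP => /connectP [p pth hs].
suff : last u p \in Y by rewrite -hs => sY; rewrite (disjointFr dis sY) in sS.
elim: p u uY pth {hs} => [|c p IH] u uY //= /andP[hadj hp].
by apply: IH hp; rewrite -(adj_cut hadj).
Qed.

Lemma lambda_le_cut S Y u : u \in Y -> [disjoint Y & S] -> lambda S u <= dcut Y.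
Proof. by move=> uY dis; apply: bigmin_leq; apply: separates_cut. Qed.

(* ... and, when u is not in S, some such cut attains it: the vertices still
   reachable from u after deleting an optimal separating edge set. *)
Lemma lambda_min_cut S u : u \notin S ->
  exists Y, [/\ u \in Y, [disjoint Y & S] & dcut Y <= lambda S u].
Proof.
move=> uS.
have [F hF hc] : exists2 F, separates F u S & #|F| <= lambda S u.
  apply: (bigmin_arg (j := setT)); last exact: max_card.
  apply/forall_inP => s sS.
  apply/negP => /connectP [[|c p] /= pth hs].
    by move: sS; rewrite hs (negbTE uS).
  by move: pth => /andP[/existsP [e /andP[]]]; rewrite inE.
exists [set v | connect (adj_minus F) u v]; split.
- by rewrite inE connect0.
- apply/pred0P => s /=; rewrite inE; apply/andP => -[hc' sS].
  by move/forall_inP: hF => /(_ _ sS); rewrite hc'.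
- apply: leq_trans hc; apply: subset_leq_card; apply/subsetP => e.
  rewrite !inE /crosses; apply: contraR => eF.
  have h1 : adj_minus F (src e) (tgt e) by apply/existsP; exists e; rewrite eF !eqxx.
  have h2 : adj_minus F (tgt e) (src e) by apply/existsP; exists e; rewrite eF !eqxx orbT.
  apply/eqP; rewrite !inE; apply/idP/idP => hc'.
    exact: connect_trans hc' (connect1 h1).
  exact: connect_trans hc' (connect1 h2).
Qed.

Lemma lambda_le_deg S u : u \notin S -> lambda S u <= deg u.
Proof.
move=> uS; rewrite -dcut_set1; apply: lambda_le_cut; first by rewrite inE.
by rewrite disjoints1.
Qed.

Lemma lambda_le_deg_sub1 S u r : u != r -> S \subset [set r] -> lambda S u <= deg r.
Proof.
move=> ur sub; rewrite -dcut_set1 -dcutC; apply: lambda_le_cut; first by rewrite !inE.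
apply/pred0P => x /=; rewrite !inE; apply/andP => -[xr xS].
by move/subsetP: sub => /(_ _ xS); rewrite inE (negbTE xr).
Qed.

Lemma lambda_le_edges S u : lambda S u <= #|edge G|.
Proof.
rewrite /lambda; elim/big_ind: _ => //= [x y hx _|F _]; first by rewrite geq_min hx.
exact: max_card.
Qed.

Lemma lambda_set0 u : lambda set0 u = 0.
Proof.
apply/eqP; rewrite -leqn0; apply: leq_trans (lambda_le_cut (Y := setT) _ _) _.
- by rewrite inE.
- by apply/pred0P => x; rewrite /= !inE.
by rewrite leqn0 cards_eq0; apply/eqP/setP => e; rewrite !inE /crosses !inE.
Qed.

Lemma uncross_min_cut S C X h :
  h \in C -> [disjoint C & S] -> dcut C <= lambda S h ->
  dcut (if h \in X then X :|: C else X :\: C) <= dcut X.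
Proof.
move=> hC dis dC; case: ifP => hX.
- have hI : dcut C <= dcut (X :&: C).
    apply: leq_trans dC (lambda_le_cut _ _); first by rewrite inE hX hC.
    by apply: disjointWl dis; exact: subsetIr.
  by rewrite -(leq_add2r (dcut C)); apply: leq_trans (dcut_submod X C); rewrite leq_add2l.
- have hD : dcut C <= dcut (C :\: X).
    apply: leq_trans dC (lambda_le_cut _ _); first by rewrite inE hX hC.
    by apply: disjointWl dis; exact: subsetDl.
  by rewrite -(leq_add2r (dcut C)); apply: leq_trans (dcut_posimod X C); rewrite leq_add2l.
Qed.

End Cuts.

Section Orders.
Variables (G : mgraph) (k : nat).
Implicit Types (s : seq (vert G)) (u x : vert G).

Definition before s u : {set vert G} := [set x | index x s < index u s].
Definition adm_order s :=
  [/\ uniq s, forall x, x \in s & forall u, lambda (before s u) u <= k].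

Lemma before_irr s u : u \notin before s u.
Proof. by rewrite inE ltnn. Qed.

Lemma before_mem s u z : z \in before s u -> z \in s.
Proof. by rewrite inE -index_mem => /leq_trans; apply; exact: index_size. Qed.

Lemma before_cat (t1 t2 : seq (vert G)) u :
  before (t1 ++ t2) u =
  if u \in t1 then before t1 u else [set z in t1] :|: before t2 u.
Proof.
apply/setP => z; rewrite /before inE [index z _]index_cat [index u _]index_cat.
case: (boolP (u \in t1)) => u1; case: (boolP (z \in t1)) => z1; rewrite /= !inE ?z1 //.
- have hu : index u t1 < size t1 by rewrite index_mem.
  by rewrite (memNindex z1) !ltnNge (ltnW hu) (ltnW (leq_trans hu (leq_addr _ _))).
- by apply/idP; apply: leq_trans (leq_addr _ _); rewrite index_mem.
- by rewrite ltn_add2l (negbTE z1).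
Qed.

Lemma prefix_before (f : {ffun 'I_#|vert G| -> vert G}) s (i : 'I_#|vert G|) :
  (forall i, index (f i) s = i) -> (forall x, exists j, x = f j) ->
  [set f j | j : 'I_#|vert G| & (j < i)%N] = before s (f i).
Proof.
move=> hidx hsurj; apply/setP => x; rewrite !inE hidx.
apply/imsetP/idP => [[j hj ->]|hx]; first by rewrite inE in hj; rewrite hidx.
by case: (hsurj x) hx => j -> hj; exists j; rewrite // inE -(hidx j).
Qed.

Lemma adm_order_edge_adm s : adm_order s -> edge_adm G <= k.
Proof.
case=> us hs hl.
have sz : size s = #|vert G|.
  rewrite cardT; apply: perm_size; apply: uniq_perm; rewrite ?enum_uniq //.
  by move=> x; rewrite mem_enum hs.
pose f : {ffun 'I_#|vert G| -> vert G} := [ffun i => nth (enum_val i) s i].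
have fE i x0 : f i = nth x0 s i.
  by rewrite ffunE; apply: set_nth_default; rewrite sz.
have hidx i : index (f i) s = i by rewrite (fE i (f i)) index_uniq ?sz.
have injf : injectiveb f.
  by apply/injectiveP => i j /(congr1 (index^~ s)); rewrite !hidx => /val_inj.
have hsurj x : exists j, x = f j.
  have hx : index x s < #|vert G| by rewrite -sz index_mem.
  by exists (Ordinal hx); rewrite (fE _ x) /= nth_index.
apply: leq_trans (bigmin_leq _ _ injf) _.
by apply/bigmax_leqP => i _; rewrite (prefix_before _ hidx hsurj); exact: hl.
Qed.

Lemma edge_adm_order : edge_adm G <= k -> exists s, adm_order s.
Proof.
move=> hk.
have [f /injectiveP injf hf] :
    exists2 f : {ffun 'I_#|vert G| -> vert G}, injectiveb f &
      \max_(i < #|vert G|) lambda [set f j | j : 'I_#|vert G| & (j < i)%N] (f i)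
        <= edge_adm G.
  apply: (bigmin_arg (j := [ffun i => enum_val i])).
    by apply/injectiveP => i j; rewrite !ffunE => /enum_val_inj.
  by apply/bigmax_leqP => i _; exact: lambda_le_edges.
pose s := [seq f i | i <- enum 'I_#|vert G|].
have hidx i : index (f i) s = i by rewrite index_map // index_enum_ord.
have hsurj x : exists j, x = f j.
  have := inj_card_onto injf _ x; rewrite card_ord => /(_ (leqnn _)).
  by case/codomP => j ->; exists j.
exists s; split.
- by rewrite map_inj_uniq // enum_uniq.
- by move=> x; case: (hsurj x) => j ->; rewrite map_f // mem_enum.
- move=> u; case: (hsurj u) => i ->; rewrite -(prefix_before _ hidx hsurj).
  by apply: leq_trans hk; apply: leq_trans hf; exact: leq_bigmax.
Qed.
End Orders.

(* A contraction of G onto H: pi sends each vertex of G to a vertex of H or to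
   None (deleted), phi sends each edge of G to an edge of H or to None; an edge
   sent to None has both ends identified, the other edges are mapped
   injectively onto edges between the images of their ends. *)
Definition contraction (G H : mgraph) (pi : vert G -> option (vert H))
    (phi : edge G -> option (edge H)) :=
  [/\ forall e, phi e = None -> pi (src e) = pi (tgt e),
      forall e e', phi e = Some e' ->
        (pi (src e) = Some (src e') /\ pi (tgt e) = Some (tgt e')) \/
        (pi (src e) = Some (tgt e') /\ pi (tgt e) = Some (src e'))
    & forall e1 e2 e', phi e1 = Some e' -> phi e2 = Some e' -> e1 = e2].

(* Local edge-connectivity can only decrease along a contraction: a minimum
   cut in H pulls back to a cut in G of no larger size. *)
Lemma contraction_lambda (G H : mgraph) pi phi (S : {set vert G}) (S' : {set vert H}) u u' :
  contraction pi phi -> pi u = Some u' -> u' \notin S' ->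
  (forall s s', s \in S -> pi s = Some s' -> s' \in S') ->
  lambda S u <= lambda S' u'.
Proof.
case=> c1 c2 c3 hu hu' hS.
have [Y' [uY' dis hY']] := lambda_min_cut hu'.
pose Y := [set x | if pi x is Some x' then x' \in Y' else false].
apply: leq_trans hY'; apply: leq_trans (lambda_le_cut (Y := Y) _ _) _.
- by rewrite inE hu.
- apply/pred0P => x /=; rewrite inE; case E: (pi x) => [x'|] //.
  by apply/andP => -[hx /hS /(_ E)]; rewrite (disjointFr dis hx).
have hcr e : crosses Y e -> exists2 e', phi e = Some e' & crosses Y' e'.
  rewrite /crosses !inE; case E: (phi e) => [e'|].
    move=> hc; exists e' => //; move: hc.
    by case: (c2 _ _ E) => [[-> ->]|[-> ->]] //; rewrite eq_sym.
  by rewrite (c1 _ E) eqxx.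
rewrite /dcut.
have -> : #|[set e | crosses Y e]| = #|phi @: [set e | crosses Y e]|.
  rewrite card_in_imset // => e1 e2; rewrite !inE => /hcr [e1' h1 _] /hcr [e2' h2 _].
  by rewrite h1 h2 => -[E]; apply: c3 h1 _; rewrite h2 E.
rewrite -(card_imset [set e | crosses Y' e] (@Some_inj _)); apply: subset_leq_card.
apply/subsetP => o /imsetP [e]; rewrite inE => /hcr [e' -> he'] ->.
by apply/imsetP; exists e'; rewrite ?inE.
Qed.

Definition dominated (G : mgraph) k (S : {set vert G}) (u : vert G) :=
  exists (H : mgraph) pi phi (sH : seq (vert H)) u',
    [/\ contraction pi phi, adm_order k sH, pi u = Some u' &
        forall z z', z \in S -> pi z = Some z' -> z' \in before sH u'].

Lemma dominated_lambda (G : mgraph) k (S : {set vert G}) u :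
  dominated k S u -> lambda S u <= k.
Proof.
case=> H [pi [phi [sH [u' [hc [_ _ hl] hu hS]]]]].
exact: leq_trans (contraction_lambda hc hu (before_irr _ _) hS) (hl u').
Qed.

Lemma adm_order_dominated (G : mgraph) k (t : seq (vert G)) :
  uniq t -> (forall x, x \in t) -> (forall u, dominated k (before t u) u) ->
  adm_order k t.
Proof. by move=> ut ht hd; split=> // u; apply: dominated_lambda. Qed.

(* The invariant proved for every graph of A_k^(<=k): a k-admissible ordering
   exists starting at any prescribed vertex. *)
Definition rooted_adm k (G : mgraph) := forall r : vert G, exists t, adm_order k (r :: t).

Lemma rooted_adm_order (G : mgraph) k : rooted_adm k G -> exists s : seq (vert G), adm_order k s.
Proof.
move=> hG; case: (pickP (@predT (vert G))) => [r _|h].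
  by case: (hG r) => t ht; exists (r :: t).
by exists [::]; split => // x; have := h x.
Qed.

Lemma adm_order_iso (G H : mgraph) k (fV : vert G -> vert H) (gV : vert H -> vert G)
    (fE : edge G -> edge H) (gE : edge H -> edge G) :
  cancel fV gV -> cancel gV fV -> cancel fE gE ->
  (forall e, ((src (fE e) == fV (src e)) && (tgt (fE e) == fV (tgt e)))
          || ((src (fE e) == fV (tgt e)) && (tgt (fE e) == fV (src e)))) ->
  forall t, adm_order k t -> adm_order k (map gV t).
Proof.
move=> fgV gfV fgE hE t ht; have [ut ct _] := ht.
have gVinj : injective gV := can_inj gfV.
apply: adm_order_dominated; first by rewrite map_inj_uniq.
  by move=> x; rewrite -(fgV x) map_f ?ct.
move=> u; exists H, (Some \o fV), (Some \o fE), t, (fV u); split => //.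
- split => // [e e' [<-]|e1 e2 e' [<-] [] /(can_inj fgE) //].
  by case/orP: (hE e) => /andP[/eqP -> /eqP ->]; [left|right].
- by move=> z z' + [<-]; rewrite -{1}(fgV z) -{1}(fgV u) !inE !index_map.
Qed.

Lemma rooted_adm_iso (G H : mgraph) k : iso G H -> rooted_adm k H -> rooted_adm k G.
Proof.
case=> fV [fE [[gV fgV gfV] [gE fgE _] hE]] hH r; case: (hH (fV r)) => t ht.
by exists (map gV t); rewrite -[r]fgV -map_cons; exact: adm_order_iso ht.
Qed.

(* Graphs of A_k: start at r, then put the (at most one) vertex h of large
   degree, whose predecessor set {r} is cut off by deg r <= k edges. *)
Lemma rooted_adm_inA (G : mgraph) k : inA k G -> rooted_adm k G.
Proof.
rewrite /inA => hA r.
have high_uniq (x y : vert G) : k < deg x -> k < deg y -> x = y.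
  move=> hx hy; apply/eqP; apply: contraLR hA => hxy; rewrite -ltnNge.
  by apply/card_gt1P; exists x, y; rewrite !inE.
have adm_root (t : seq (vert G)) : uniq (r :: t) -> (forall x, x \in r :: t) ->
    (forall u, u != r -> lambda (before (r :: t) u) u <= k) -> adm_order k (r :: t).
  move=> ut ht hl; split => // u; case: (u =P r) => [->|/eqP ur]; last exact: hl.
  by rewrite (_ : before _ _ = set0) ?lambda_set0 //; apply/setP => x; rewrite !inE /= eqxx.
have low u t : k < deg u = false -> lambda (before t u) u <= k.
  by move/negbT; rewrite -leqNgt; apply: leq_trans; apply/lambda_le_deg/before_irr.
case: (pickP [pred h | (k < deg h) && (h != r)]) => [h /andP[hh hr]|nh].
- exists (h :: [seq x <- enum (vert G) | (x != r) && (x != h)]); apply: adm_root.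
  + rewrite /= !inE negb_or eq_sym hr /= !mem_filter !eqxx /= andbF.
    by rewrite filter_uniq ?enum_uniq.
  + move=> x; rewrite !inE mem_filter mem_enum andbT.
    by case: (x =P r) => //= _; case: (x =P h).
  move=> u ur; case: (u =P h) => [->|/eqP uh].
    have rlow : deg r <= k.
      by rewrite leqNgt; apply/negP => /(high_uniq _ _ hh) hrh; rewrite hrh eqxx in hr.
    apply: leq_trans rlow; apply: lambda_le_deg_sub1; first by rewrite hr.
    apply/subsetP => x; rewrite !inE /= eqxx [r == h]eq_sym (negbTE hr).
    by case: (r =P x) => // ->.
  by apply: low; apply/negP => hu; move: uh; rewrite (high_uniq _ _ hu hh) eqxx.
- exists [seq x <- enum (vert G) | x != r]; apply: adm_root.
  + by rewrite /= mem_filter eqxx /= filter_uniq ?enum_uniq.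
  + by move=> x; rewrite inE mem_filter mem_enum andbT; case: (x =P r).
  by move=> u ur; apply: low; apply/negP => hu; have := nh u; rewrite /= hu ur.
Qed.

Section DUnionOrders.
Variables (G1 G2 : mgraph) (k : nat).
Let G := dunion G1 G2.

Definition du_left (z : vert G) : option (vert G1) := if z is inl x then Some x else None.
Definition du_left_edge (e : edge G) : option (edge G1) := if e is inl e1 then Some e1 else None.
Definition du_right (z : vert G) : option (vert G2) := if z is inr y then Some y else None.
Definition du_right_edge (e : edge G) : option (edge G2) := if e is inr e2 then Some e2 else None.

Lemma du_left_contraction : contraction du_left du_left_edge.
Proof.
split; first by case.
  by case=> // e e' [<-]; left.
by case=> // e1 [] // e2 e' [->] [->].
Qed.

Lemma du_right_contraction : contraction du_right du_right_edge.
Proof.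
split; first by case.
  by case=> // e e' [<-]; left.
by case=> // e1 [] // e2 e' [->] [->].
Qed.

Lemma adm_order_dunion (t1 : seq (vert G1)) (t2 : seq (vert G2)) :
  adm_order k t1 -> adm_order k t2 -> adm_order k (map inl t1 ++ map inr t2 : seq (vert G)).
Proof.
move=> h1 h2; case: (h1) (h2) => u1 c1 _ [u2 c2 _].
apply: adm_order_dominated; [exact: uniq_sum_cat | exact: mem_sum_cat |].
have inr_notin (b : vert G2) : (inr b \in (map inl t1 : seq (vert G))) = false.
  by apply/mapP => -[].
case=> [x|y]; rewrite before_cat ?(mem_map inl_inj) ?c1 ?inr_notin.
- exists G1, du_left, du_left_edge, t1, x; split => //; first exact: du_left_contraction.
  by case=> // a a'; rewrite !inE !(index_map inl_inj) => + [<-].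
- exists G2, du_right, du_right_edge, t2, y; split => //; first exact: du_right_contraction.
  by case=> // b b'; rewrite !inE inr_notin !(index_map inr_inj) => + [<-].
Qed.

End DUnionOrders.

(* Rooted orderings of a disjoint union: the summand containing the root is
   listed first; a root in the second summand is handled by swapping the
   summands. *)
Lemma rooted_adm_dunion (G1 G2 : mgraph) k :
  rooted_adm k G1 -> rooted_adm k G2 -> rooted_adm k (dunion G1 G2).
Proof.
have left_root (H1 H2 : mgraph) (x : vert H1) : rooted_adm k H1 -> rooted_adm k H2 ->
    exists t, adm_order k ((inl x : vert (dunion H1 H2)) :: t).
  move=> h1 h2; case: (h1 x) => t ht; case: (rooted_adm_order h2) => s hs.
  by exists (map inl t ++ map inr s); exact: (adm_order_dunion ht hs).
move=> h1 h2 [x|y]; first exact: left_root.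
pose sw (A B : Type) (z : A + B) : B + A := match z with inl a => inr a | inr b => inl b end.
have swK (A B : Type) : cancel (@sw A B) (@sw B A) by case.
have [t ht] := left_root G2 G1 y h2 h1.
exists (map (@sw _ _) t).
apply: (@adm_order_iso (dunion G1 G2) (dunion G2 G1) k _ _ (@sw _ _) (@sw _ _)
          (swK _ _) (swK _ _) (swK _ _) _ _ ht).
by case=> e /=; rewrite !eqxx.
Qed.

Section ESumOrders.
Variables (G1 G2 : mgraph) (v1 : vert G1) (v2 : vert G2) (sigma : edge G1 -> edge G2).
Hypothesis hsigma : forall e, incident v1 e -> incident v2 (sigma e).
Hypothesis hinj : {in [pred e | incident v1 e] &, injective sigma}.
Variable k : nat.
Let G := edge_sum hsigma.
Let V1 := {x : vert G1 | x != v1}.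
Let V2 := {y : vert G2 | y != v2}.

(* The edge sum contracts onto G1 by merging the G2 side back into v1, and
   onto G2 by merging the G1 side back into v2. *)
Definition es_left (z : vert G) : option (vert G1) :=
  if z is inl x then Some (val x) else Some v1.
Definition es_left_edge (e : edge G) : option (edge G1) :=
  match e with inl (inl e1) => Some (val e1) | inl (inr _) => None | inr e1 => Some (val e1) end.
Definition es_right (z : vert G) : option (vert G2) :=
  if z is inr y then Some (val y) else Some v2.
Definition es_right_edge (e : edge G) : option (edge G2) :=
  match e with
  | inl (inl _) => None | inl (inr e2) => Some (val e2) | inr e1 => Some (sigma (val e1)) end.

Lemma es_left_contraction : contraction es_left es_left_edge.
Proof.
split.
- by case=> [[[e h]|[e h]]|[e h]].
- case=> [[[e h]|[e h]]|[e h]] e' //= [<-]; first by left.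
  rewrite /other; case: (src e =P v1) => [hs|hs]; first by right; rewrite hs.
  by left; move: h; rewrite /incident; case: (src e =P v1) => //= _ /eqP ->.
- case=> [[[a ha]|[a ha]]|[a ha]] [[[b hb]|[b hb]]|[b hb]] e' //= [<-] [E]; subst.
  + by rewrite (bool_irrelevance ha hb).
  + by case/negP: ha.
  + by case/negP: hb.
  + by rewrite (bool_irrelevance ha hb).
Qed.

Lemma es_right_contraction : contraction es_right es_right_edge.
Proof.
split.
- by case=> [[[e h]|[e h]]|[e h]].
- case=> [[[e h]|[e h]]|[e h]] e' //= [<-]; first by left.
  have h' := hsigma h.
  rewrite /other; case: (src (sigma e) =P v2) => [hs|hs]; first by left; rewrite hs.
  by right; move: h'; rewrite /incident; case: (src (sigma e) =P v2) => //= _ /eqP ->.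
- case=> [[[a ha]|[a ha]]|[a ha]] [[[b hb]|[b hb]]|[b hb]] e' //= [<-] [E].
  + by subst; rewrite (bool_irrelevance ha hb).
  + by case/negP: ha; rewrite -E hsigma.
  + by case/negP: hb; rewrite E hsigma.
  + by have E' := hinj hb ha E; subst; rewrite (bool_irrelevance ha hb).
Qed.

(* With the root on the G1 side: an ordering of G1, followed by an ordering of
   G2 starting at v2 (so that the merged G1 side precedes all of G2). *)
Lemma adm_order_es_left (l1 : seq (vert G1)) (t2 : seq (vert G2)) :
  adm_order k l1 -> adm_order k (v2 :: t2) ->
  adm_order k (map inl (pmap insub l1) ++ map inr (pmap insub (v2 :: t2)) : seq (vert G)).
Proof.
move=> h1 h2; case: (h1) (h2) => u1 c1 _ [u2 c2 _].
set l1' : seq V1 := pmap insub l1; set l2' : seq V2 := pmap insub (v2 :: t2).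
have m1 x : x \in l1' by rewrite mem_pmap_sub c1.
have inr_notin (b : V2) : (inr b \in (map inl l1' : seq (vert G))) = false.
  by apply/mapP => -[].
apply: adm_order_dominated.
- exact: uniq_sum_cat (pmap_sub_uniq _ u1) (pmap_sub_uniq _ u2).
- by apply: mem_sum_cat => z; rewrite mem_pmap_sub ?c1 ?c2.
case=> [x|y]; rewrite before_cat ?(mem_map inl_inj) ?m1 ?inr_notin.
- exists G1, es_left, es_left_edge, l1, (val x); split => //; first exact: es_left_contraction.
  move=> z z' /[dup] /before_mem /mapP [b _ ->].
  by rewrite !inE !(index_map inl_inj) => hb [<-]; apply: index_pmap_insub.
- exists G2, es_right, es_right_edge, (v2 :: t2), (val y); split => //.
    exact: es_right_contraction.
  case=> b z'; rewrite !inE ?inr_notin ?(mem_map inl_inj) ?m1 => hb [<-].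
    by rewrite /= eqxx eq_sym (negbTE (valP y)).
  by rewrite !(index_map inr_inj) in hb; apply: index_pmap_insub.
Qed.

Lemma adm_order_es_right (t1 : seq (vert G1)) (l2 : seq (vert G2)) :
  adm_order k (v1 :: t1) -> adm_order k l2 ->
  adm_order k (map inr (pmap insub l2) ++ map inl (pmap insub (v1 :: t1)) : seq (vert G)).
Proof.
move=> h1 h2; case: (h1) (h2) => u1 c1 _ [u2 c2 _].
set l1' : seq V1 := pmap insub (v1 :: t1); set l2' : seq V2 := pmap insub l2.
have m2 y : y \in l2' by rewrite mem_pmap_sub c2.
have inl_notin (a : V1) : (inl a \in (map inr l2' : seq (vert G))) = false.
  by apply/mapP => -[].
apply: adm_order_dominated.
- by rewrite uniq_catC; exact: uniq_sum_cat (pmap_sub_uniq _ u1) (pmap_sub_uniq _ u2).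
- move=> z; rewrite mem_cat orbC -mem_cat.
  by apply: mem_sum_cat => z'; rewrite mem_pmap_sub ?c1 ?c2.
case=> [x|y]; rewrite before_cat ?(mem_map inr_inj) ?m2 ?inl_notin.
- exists G1, es_left, es_left_edge, (v1 :: t1), (val x); split => //.
    exact: es_left_contraction.
  case=> b z'; rewrite !inE ?inl_notin ?(mem_map inr_inj) ?m2 => hb [<-].
    by rewrite !(index_map inl_inj) in hb; apply: index_pmap_insub.
  by rewrite /= eqxx eq_sym (negbTE (valP x)).
- exists G2, es_right, es_right_edge, l2, (val y); split => //; first exact: es_right_contraction.
  move=> z z' /[dup] /before_mem /mapP [b _ ->].
  by rewrite !inE !(index_map inr_inj) => hb [<-]; apply: index_pmap_insub.
Qed.

Lemma rooted_adm_edge_sum : rooted_adm k G1 -> rooted_adm k G2 -> rooted_adm k G.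
Proof.
move=> h1 h2; case=> [x|y].
- case: (h1 (val x)) => t1 ht1; case: (h2 v2) => t2 ht2.
  exists (map inl (pmap insub t1) ++ map inr (pmap insub (v2 :: t2))).
  by have := adm_order_es_left ht1 ht2; rewrite /= valK.
- case: (h2 (val y)) => t2 ht2; case: (h1 v1) => t1 ht1.
  exists (map inr (pmap insub t2) ++ map inl (pmap insub (v1 :: t1))).
  by have := adm_order_es_right ht1 ht2; rewrite /= valK.
Qed.
End ESumOrders.

Lemma inAsum_rooted_adm k G : inAsum k G -> rooted_adm k G.
Proof.
elim=> {G} [G hA|G1 G2 G _ i1 _ i2 hiso|G1 G2 G v1 v2 sigma hsigma _ i1 _ i2 _ _ hinj _ hiso].
- exact: rooted_adm_inA.
- exact: rooted_adm_iso hiso (rooted_adm_dunion i1 i2).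
- exact: rooted_adm_iso hiso (rooted_adm_edge_sum hinj i1 i2).
Qed.

Lemma inAsum_edge_adm k G : inAsum k G -> edge_adm G <= k.
Proof.
by move/inAsum_rooted_adm/rooted_adm_order => [s]; apply: adm_order_edge_adm.
Qed.

Section Quotients.
Variables (G : mgraph) (A : {set vert G}).

Definition induced_edge : finType := {e : edge G | (src e \in A) && (tgt e \in A)}.
Definition induced_src (e : induced_edge) : {x : vert G | x \in A} :=
  exist _ (src (val e)) (elimT andP (valP e)).1.
Definition induced_tgt (e : induced_edge) : {x : vert G | x \in A} :=
  exist _ (tgt (val e)) (elimT andP (valP e)).2.
Lemma induced_loopless e : induced_src e != induced_tgt e.
Proof. by apply/negP => /eqP [] /eqP; apply/negP; exact: loopless. Qed.
Definition induced := MGraph induced_loopless.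

(* G with the complement of A contracted to a single vertex None; edges
   inside V - A disappear. *)
Definition collapse_edge : finType := {e : edge G | (src e \in A) || (tgt e \in A)}.
Definition collapse_src (e : collapse_edge) : option {x : vert G | x \in A} := insub (src (val e)).
Definition collapse_tgt (e : collapse_edge) : option {x : vert G | x \in A} := insub (tgt (val e)).
Lemma collapse_loopless e : collapse_src e != collapse_tgt e.
Proof.
rewrite /collapse_src /collapse_tgt; apply/negP => /eqP.
case: insubP => [u hu eu|hu]; case: insubP => [u' hu' eu'|hu'] //.
- by move=> [E]; have := loopless (val e); rewrite -eu -eu' E eqxx.
- by move: (valP e); rewrite (negbTE hu) (negbTE hu').
Qed.
Definition collapse := MGraph collapse_loopless.

Lemma card_induced : #|vert induced| = #|A|.
Proof. by rewrite card_sig. Qed.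

Lemma card_collapse : #|vert collapse| = #|A|.+1.
Proof. by rewrite /= card_option card_sig. Qed.

Lemma adm_order_induced k (s : seq (vert G)) :
  adm_order k s -> adm_order k (pmap insub s : seq (vert induced)).
Proof.
move=> hs; have [us cs _] := hs; apply: adm_order_dominated.
- exact: pmap_sub_uniq.
- by move=> x; rewrite mem_pmap_sub cs.
move=> u; exists G, (Some \o val), (Some \o val), s, (val u); split => //.
- split=> [e //|e e' /= [<-]|e1 e2 e' /= [<-] [] E]; [by left | exact: val_inj].
- by move=> z z' + [<-]; rewrite !inE; exact: index_pmap_insub.
Qed.

Lemma insub_eqNone (x : vert G) : ((insub x : option {x | x \in A}) == None) = (x \notin A).
Proof. by case: insubP => [u hu _|hu]; rewrite ?hu. Qed.

Lemma insub_eqSome (x : vert G) c : ((insub x : option {x | x \in A}) == Some c) = (x == val c).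
Proof.
case: insubP => [u hu <-|hu]; first by rewrite (inj_eq (@Some_inj _)) (inj_eq val_inj).
by apply/esym/negbTE; apply: contra hu => /eqP ->; exact: valP.
Qed.

Lemma collapse_incident_none (e : edge collapse) :
  incident (None : vert collapse) e = (src (val e) \notin A) || (tgt (val e) \notin A).
Proof. by rewrite /incident /= /collapse_src /collapse_tgt !insub_eqNone. Qed.

Lemma collapse_deg_none : deg (None : vert collapse) = dcut A.
Proof.
rewrite /deg /dcut -(card_imset _ val_inj); apply: eq_card => e.
rewrite inE; apply/imsetP/idP => [[e' + ->]|].
  rewrite inE collapse_incident_none /crosses.
  by have := valP e'; case: (src _ \in A); case: (tgt _ \in A).
rewrite /crosses => hc.
have he : (src e \in A) || (tgt e \in A) by move: hc; case: (src e \in A); case: (tgt e \in A).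
exists (exist _ e he); last by [].
by rewrite inE collapse_incident_none; move: hc; case: (src e \in A); case: (tgt e \in A).
Qed.

Lemma collapse_deg_some c : deg (Some c : vert collapse) <= deg (val c).
Proof.
rewrite /deg -(card_imset _ val_inj); apply: subset_leq_card; apply/subsetP => e.
by case/imsetP => e' + ->; rewrite !inE /incident /collapse_src /collapse_tgt !insub_eqSome.
Qed.

Lemma collapse_dcut (X : {set vert collapse}) :
  dcut X <= dcut [set x | (insub x : option {x : vert G | x \in A}) \in X].
Proof.
rewrite /dcut -(card_imset _ val_inj); apply: subset_leq_card; apply/subsetP => e.
by case/imsetP => e' + ->; rewrite !inE /crosses !inE.
Qed.

End Quotients.

Lemma iso_of (G H : mgraph) (fV : vert H -> vert G) (fE : edge H -> edge G) :
  injective fV -> (forall y, exists x, y = fV x) ->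
  injective fE -> (forall y, exists x, y = fE x) ->
  (forall e, ((src (fE e) == fV (src e)) && (tgt (fE e) == fV (tgt e)))
          || ((src (fE e) == fV (tgt e)) && (tgt (fE e) == fV (src e)))) ->
  iso G H.
Proof.
have bij (T T' : finType) (f : T -> T') :
    injective f -> (forall y, exists x, y = f x) -> bijective f.
  move=> hf hs; apply: (inj_card_bij hf); rewrite -(card_codom hf).
  by apply/subset_leq_card/subsetP => y _; case: (hs y) => x ->; exact: codom_f.
move=> iV sV iE sE hE.
have [gV fgV gfV] := bij _ _ _ iV sV; have [gE fgE gfE] := bij _ _ _ iE sE.
exists gV, gE; split; [by exists fV | by exists fE |] => e.
have := hE (gE e); rewrite gfE => /orP[]/andP[/eqP E1 /eqP E2].
  by rewrite E1 E2 !fgV !eqxx.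
by rewrite E1 E2 !fgV !eqxx orbT.
Qed.

Lemma iso_dunion_split (G : mgraph) (A : {set vert G}) :
  dcut A = 0 -> iso G (dunion (induced A) (induced (~: A))).
Proof.
move=> /dcut_eq0 hA.
pose fV (z : vert (dunion (induced A) (induced (~: A)))) : vert G :=
  match z with inl x => val x | inr y => val y end.
pose fE (z : edge (dunion (induced A) (induced (~: A)))) : edge G :=
  match z with inl x => val x | inr y => val y end.
apply: (@iso_of _ _ fV fE).
- case=> [x|y] [x'|y'] /= E.
  + by rewrite (val_inj E).
  + by have /= := valP y'; rewrite inE -E (valP x).
  + by have /= := valP y; rewrite inE E (valP x').
  + by rewrite (val_inj E).
- move=> x; case: (boolP (x \in A)) => hx; first by exists (inl (exist _ x hx)).
  have hx' : x \in ~: A by rewrite inE.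
  by exists (inr (exist _ x hx')).
- case=> [x|y] [x'|y'] /= E.
  + by rewrite (val_inj E).
  + by have /andP[] /= := valP y'; rewrite inE -E (andP (valP x)).1.
  + by have /andP[] /= := valP y; rewrite inE E (andP (valP x')).1.
  + by rewrite (val_inj E).
- move=> e; have := hA e; rewrite /crosses negbK => /eqP he.
  case: (boolP (src e \in A)) => hs.
    have h : (src e \in A) && (tgt e \in A) by rewrite -he hs.
    by exists (inl (exist _ e h)).
  have h : (src e \in ~: A) && (tgt e \in ~: A) by rewrite !inE -he hs.
  by exists (inr (exist _ e h)).
- by case=> e /=; rewrite !eqxx.
Qed.

(* Splitting G along a cut C: G is the dcut C-edge sum of G/(V - C) and
   G/C, glued at their contracted vertices, each edge of the cut being paired
   with itself. d0 is any edge of G/C, needed only to make sigma total. *)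
Section SplitAtCut.
Variables (G : mgraph) (C : {set vert G}) (d0 : edge (collapse (~: C))).
Let G1 := collapse C.
Let G2 := collapse (~: C).

Definition cut_sigma (e : edge G1) : edge G2 := odflt d0 (insub (val e)).

Lemma cut_sigma_val e : incident (None : vert G1) e -> val (cut_sigma e) = val e.
Proof.
rewrite collapse_incident_none => h; rewrite /cut_sigma.
by case: insubP => [u _ <-|] //; rewrite !inE h.
Qed.

Lemma cut_sigma_incident e :
  incident (None : vert G1) e -> incident (None : vert G2) (cut_sigma e).
Proof.
move=> h; rewrite collapse_incident_none (cut_sigma_val h) !inE !negbK; exact: (valP e).
Qed.

Lemma cut_sigma_inj : {in [pred e | incident (None : vert G1) e] &, injective cut_sigma}.
Proof.
by move=> e1 e2 h1 h2 E; apply: val_inj; rewrite -(cut_sigma_val h1) -(cut_sigma_val h2) E.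
Qed.

Lemma cut_sigma_onto f : incident (None : vert G2) f ->
  exists2 e, incident (None : vert G1) e & cut_sigma e = f.
Proof.
move=> hf.
have hf' : (src (val f) \in C) || (tgt (val f) \in C).
  by move: hf; rewrite collapse_incident_none !inE !negbK.
have hi : incident (None : vert G1) (exist _ (val f) hf').
  by rewrite collapse_incident_none /=; have := valP f; rewrite !inE.
by exists (exist _ (val f) hf') => //; apply: val_inj; rewrite (cut_sigma_val hi).
Qed.

Let GS := edge_sum cut_sigma_incident.
Let v0 := src (val d0).

Definition split_vert (z : vert GS) : vert G :=
  match z with
  | inl z1 => odflt v0 (omap val (val z1))
  | inr z2 => odflt v0 (omap val (val z2)) end.
Definition split_edge (e : edge GS) : edge G :=
  match e with
  | inl (inl e1) => val (val e1) | inl (inr e2) => val (val e2) | inr e1 => val (val e1) end.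

Lemma split_vert_inj : injective split_vert.
Proof.
case=> [[[c1|] h1]|[[c1|] h1]] // [[[c2|] h2]|[[c2|] h2]] //= E.
- by have := val_inj E => ?; subst; rewrite (bool_irrelevance h1 h2).
- by have /= := valP c2; rewrite inE -E (valP c1).
- by have /= := valP c1; rewrite inE E (valP c2).
- by have := val_inj E => ?; subst; rewrite (bool_irrelevance h1 h2).
Qed.

Lemma split_vert_onto y : exists x, y = split_vert x.
Proof.
case: (boolP (y \in C)) => hy; first by exists (inl (exist _ (Some (exist _ y hy)) isT)).
have hy' : y \in ~: C by rewrite inE.
by exists (inr (exist _ (Some (exist _ y hy')) isT)).
Qed.

Lemma split_edge_inj : injective split_edge.
Proof.
case=> [[[a ha]|[a ha]]|[a ha]] [[[b hb]|[b hb]]|[b hb]] /= E;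
  have ha' := ha; have hb' := hb;
  rewrite collapse_incident_none in ha'; rewrite collapse_incident_none in hb';
  try (by have := val_inj E => ?; subst; rewrite (bool_irrelevance ha hb));
  exfalso; move: ha' hb' (valP a) (valP b) => /=; rewrite ?inE E;
  by case: (src (sval b) \in C); case: (tgt (sval b) \in C).
Qed.

Lemma split_edge_onto y : exists x, y = split_edge x.
Proof.
case: (boolP (src y \in C)) => hs; case: (boolP (tgt y \in C)) => ht.
- have h1 : (src y \in C) || (tgt y \in C) by rewrite hs.
  have h2 : ~~ incident (None : vert G1) (exist _ y h1) by rewrite collapse_incident_none /= hs ht.
  by exists (inl (inl (exist _ (exist _ y h1) h2))).
- have h1 : (src y \in C) || (tgt y \in C) by rewrite hs.
  have h2 : incident (None : vert G1) (exist _ y h1) by rewrite collapse_incident_none /= ht orbT.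
  by exists (inr (exist _ (exist _ y h1) h2)).
- have h1 : (src y \in C) || (tgt y \in C) by rewrite ht orbT.
  have h2 : incident (None : vert G1) (exist _ y h1) by rewrite collapse_incident_none /= hs.
  by exists (inr (exist _ (exist _ y h1) h2)).
- have h1 : (src y \in ~: C) || (tgt y \in ~: C) by rewrite inE hs.
  have h2 : ~~ incident (None : vert G2) (exist _ y h1).
    by rewrite collapse_incident_none /= !inE hs ht.
  by exists (inl (inr (exist _ (exist _ y h1) h2))).
Qed.

Lemma split_edge_ends e :
  ((src (split_edge e) == split_vert (src e)) && (tgt (split_edge e) == split_vert (tgt e)))
  || ((src (split_edge e) == split_vert (tgt e)) && (tgt (split_edge e) == split_vert (src e))).
Proof.
case: e => [[[a ha]|[a ha]]|[a ha]].
- have := ha; rewrite collapse_incident_none negb_or !negbK => /andP[hs ht].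
  by rewrite /= /collapse_src /collapse_tgt !odflt_insub // !eqxx.
- have := ha; rewrite collapse_incident_none negb_or !negbK => /andP[hs ht].
  by rewrite /= /collapse_src /collapse_tgt !odflt_insub // !eqxx.
- have ha' := ha; rewrite collapse_incident_none in ha'.
  have := valP a; rewrite /= /other /collapse_src /collapse_tgt !insub_eqNone.
  rewrite (cut_sigma_val ha) !inE !negbK.
  move: ha'; case: (boolP (src (val a) \in C)) => hs;
    case: (boolP (tgt (val a) \in C)) => ht //= _ _.
  + by rewrite /collapse_src /collapse_tgt (cut_sigma_val ha) !odflt_insub ?inE ?eqxx.
  + by rewrite /collapse_src /collapse_tgt (cut_sigma_val ha) !odflt_insub ?inE ?eqxx ?orbT.
Qed.

Lemma iso_edge_sum_split : iso G GS.
Proof.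
exact: iso_of split_vert_inj split_vert_onto split_edge_inj split_edge_onto split_edge_ends.
Qed.

End SplitAtCut.

Lemma inAsum_cut_sum (G : mgraph) k (C : {set vert G}) : 0 < dcut C <= k ->
  inAsum k (collapse C) -> inAsum k (collapse (~: C)) -> inAsum k G.
Proof.
case/andP=> hd dCk h1 h2.
have [e0] : exists e0, e0 \in [set e | crosses C e] by apply/set0Pn; rewrite -card_gt0.
rewrite inE => he0.
have he0' : (src e0 \in ~: C) || (tgt e0 \in ~: C).
  by move: he0; rewrite !inE /crosses; case: (src e0 \in C); case: (tgt e0 \in C).
pose d0 : edge (collapse (~: C)) := exist _ e0 he0'.
apply: (@inAsum_sum k _ _ G _ _ _ (cut_sigma_incident d0) h1 h2).
- by rewrite !collapse_deg_none dcutC.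
- by rewrite collapse_deg_none hd.
- exact: cut_sigma_inj.
- exact: cut_sigma_onto.
- exact: iso_edge_sum_split.
Qed.

(* Contracting a minimum cut C around h (avoiding the predecessors of h in a
   k-admissible ordering s) to a single vertex keeps k-admissibility: order
   G/C like s, with C replaced by the contracted vertex at the position of h.
   Cuts around other vertices are uncrossed with C. *)
Section CollapseOrder.
Variables (G : mgraph) (k : nat) (s : seq (vert G)) (C : {set vert G}) (h : vert G).
Hypothesis hs : adm_order k s.
Hypothesis hC : h \in C.
Hypothesis disC : [disjoint C & before s h].
Hypothesis dC : dcut C <= lambda (before s h) h.
Let B := ~: C.
Let q (x : vert G) : option {x | x \in B} := insub x.
Let rep (z : option {x | x \in B}) : vert G := if z is Some x then val x else h.

Lemma collapse_adm_order : exists t, adm_order k (t : seq (vert (collapse B))).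
Proof.
case: hs => us hall hl.
have qrep z : q (rep z) = z.
  case: z => [x|] /=; first by rewrite /q valK.
  by rewrite /q; case: insubP => // u; rewrite inE hC.
have repq x : rep (q x) = if x \in C then h else x.
  rewrite /q; case: insubP => [u hu eu|hu] /=; rewrite inE in hu.
    by rewrite (negbTE hu) eu.
  by rewrite negbK in hu; rewrite hu.
pose keep x := rep (q x) == x.
pose l := filter keep s.
have qinj : {in l &, injective q}.
  move=> x y; rewrite !mem_filter => /andP[/eqP kx _] /andP[/eqP ky _] E.
  by rewrite -kx -ky E.
have repl z : rep z \in l by rewrite mem_filter /keep qrep eqxx hall.
have idx z : index z (map q l) = index (rep z) l by rewrite -{1}(qrep z) index_map_in.
exists (map q l); split.
- by rewrite map_inj_in_uniq // filter_uniq.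
- by move=> z; rewrite -(qrep z) map_f.
move=> w.
have hord (z : vert (collapse B)) :
    z \in before (map q l : seq (vert (collapse B))) w -> rep z \in before s (rep w).
  by rewrite !inE !idx; apply: index_filter_lt; rewrite /keep qrep.
case: w hord => [w0|] hord; last first.
  apply: leq_trans (lambda_le_deg (before_irr _ _)) _.
  by rewrite collapse_deg_none dcutC; apply: leq_trans dC (hl h).
set x := val w0.
have [X [xX disX dX]] := lambda_min_cut (before_irr s x).
apply: leq_trans (lambda_le_cut (Y := [set z : vert (collapse B) | rep z \in X]) _ _) _.
- by rewrite inE.
- apply/pred0P => z /=; rewrite inE; apply/andP => -[hz /hord].
  by rewrite (disjointFr disX hz).
apply: leq_trans (collapse_dcut _) _; apply: leq_trans (leq_trans _ dX) (hl x).
have -> : [set y | q y \in [set z | rep z \in X]] = if h \in X then X :|: C else X :\: C.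
  case: ifP => hX; apply/setP => y; rewrite !inE repq;
    by case: (y \in C); rewrite /= ?hX ?orbT ?orbF ?andbT.
exact: uncross_min_cut disC dC.
Qed.

End CollapseOrder.

Lemma collapse_inA (G : mgraph) k (C : {set vert G}) h : h \in C ->
  (forall x, x \in C -> x != h -> deg x <= k) -> dcut C <= k -> inA k (collapse C).
Proof.
move=> hC hlow hd; rewrite /inA.
pose hc : vert (collapse C) := Some (exist _ h hC).
apply: leq_trans (subset_leq_card (_ : _ \subset [set hc])) _; last by rewrite cards1.
apply/subsetP => -[c|]; rewrite !inE => hz.
  case: (val c =P h) => [E|/eqP ne]; first by apply/eqP; congr Some; apply: val_inj.
  have := leq_ltn_trans (hlow _ (valP c) ne) (leq_trans hz (collapse_deg_some c)).
  by rewrite ltnn.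
by move: hz; rewrite collapse_deg_none ltnNge hd.
Qed.

Lemma cut_card_gt1 (G : mgraph) (C : {set vert G}) h : h \in C -> dcut C < deg h -> 1 < #|C|.
Proof.
move=> hC hd.
have : ~~ ([set e | incident h e] \subset [set e | crosses C e]).
  by apply/negP => /subset_leq_card; rewrite leqNgt hd.
case/subsetPn => y; rewrite !inE => hyi hyc.
apply/card_gt1P; exists h, (other h y); split; rewrite ?(eq_sym h) ?other_neq //.
move: hyi hyc; rewrite /other /incident /crosses negbK.
case: (src y =P h) => [E|_] /=; first by move=> _ /eqP <-; rewrite E.
by move=> /eqP E /eqP ->; rewrite E.
Qed.

Lemma last_high (G : mgraph) k (s : seq (vert G)) : (forall x, x \in s) ->
  1 < #|[set v : vert G | k < deg v]| ->
  exists h, [/\ k < deg h, before s h != set0 &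
                forall x, k < deg x -> x != h -> x \in before s h].
Proof.
move=> hall /card_gt1P [a [b [ha hb nab]]].
have [h hh hmax] := @arg_maxnP _ a (fun x => x \in [set v | k < deg v]) (index^~ s) ha.
have later x : k < deg x -> x != h -> x \in before s h.
  move=> hx xh; have hle : index x s <= index h s by apply: hmax; rewrite inE.
  rewrite inE ltn_neqAle hle andbT.
  by apply: contra xh => /eqP /index_inj -> //; rewrite hall.
exists h; split => //; first by rewrite inE in hh.
apply/set0Pn; case: (a =P h) => [E|/eqP ah].
  by exists b; apply: later; [rewrite inE in hb | rewrite -E eq_sym].
by exists a; apply: later; first by rewrite inE in ha.
Qed.

Lemma inAsum_of_adm_order k n (G : mgraph) (s : seq (vert G)) :
  #|vert G| <= n -> adm_order k s -> inAsum k G.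
Proof.
elim: n G s => [|n IH] G s hn hs.
  by apply: inAsum_base; apply: leq_trans (max_card _) (leq_trans hn _).
have [us hall hl] := hs.
case: (leqP #|[set v : vert G | k < deg v]| 1) => hH; first exact: inAsum_base.
(* h: the last vertex of large degree; C: a minimum cut around h avoiding
   its predecessors, so dcut C <= k and h is the only vertex of C of large
   degree. *)
have [h [hh /set0Pn [x0 hx0] hlate]] := last_high hall hH.
have [C [hC disC dC]] := lambda_min_cut (before_irr s h).
have dCk : dcut C <= k := leq_trans dC (hl h).
have hlow x : x \in C -> x != h -> deg x <= k.
  move=> xC xh; rewrite leqNgt; apply/negP => hx.
  by have := hlate x hx xh; rewrite (disjointFr disC xC).
(* Both sides of the cut are proper: C contains a neighbour of h, and misses
   the predecessor x0 of h. *)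
have C2 : 1 < #|C| := cut_card_gt1 hC (leq_ltn_trans dCk hh).
have Cc1 : 0 < #|~: C| by apply/card_gt0P; exists x0; rewrite inE (disjointFl disC hx0).
have cardC : #|C| + #|~: C| <= n.+1 by rewrite cardsC.
case: (posnP (dcut C)) => hd.
  apply: inAsum_union (iso_dunion_split hd); apply: IH (adm_order_induced _ hs).
    by rewrite card_induced; lia.
  by rewrite card_induced; lia.
apply: (inAsum_cut_sum (C := C)); first by rewrite hd dCk.
  exact/inAsum_base/(collapse_inA hC hlow dCk).
have [t ht] := collapse_adm_order hs hC disC dC.
by apply: IH ht; rewrite card_collapse; lia.
Qed.

Theorem mainTheorem5 :
  (forall (G : mgraph) (k : nat), edge_adm G <= k -> inAsum k G) /\
  (forall (k : nat), 1 <= k ->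
     forall G : mgraph, inAsum k G -> edge_adm G <= 2 * k - 1).
Proof.
split.
- move=> G k /edge_adm_order [s hs]; exact: inAsum_of_adm_order (leqnn _) hs.
- move=> k hk G /inAsum_edge_adm hG; apply: leq_trans hG _; lia.
Qed.
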